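(* For $\xi,X\in\mathbb R^2$ let $$I(\xi,X)=\Big\{\theta\in[-\pi/2,\pi/2]:\ \big\langle\xi,(I+A(\theta))^{-1}A'(\theta)X\big\rangle^2\ge\theta^2|X|^2|\xi|^2/128\Big\}.$$ Then for all $\xi,X\in\mathbb R^2$, either $(0,\pi/2]\subset I(\xi,X)$ or $[-\pi/2,0)\subset I(\xi,X)$.
   Context: $A(\theta)=\frac12(R_\theta-I)=\frac12\begin{pmatrix}\cos\theta-1&-\sin\theta\\ \sin\theta&\cos\theta-1\end{pmatrix}$, where $R_\theta$ is the rotation of angle $\theta$; $A'(\theta)$ is its derivative in $\theta$, and $I$ is the $2\times2$ identity matrix. *)

From Stdlib Require Import Reals Lra.
Open Scope R_scope.

Definition vec2 : Type := (R * R)%type.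
Record mat2 : Type := Mat2 { m11 : R; m12 : R; m21 : R; m22 : R }.

Definition inner (u v : vec2) : R := fst u * fst v + snd u * snd v.
Definition normsq (u : vec2) : R := inner u u.

Definition mat_id : mat2 := Mat2 1 0 0 1.
Definition mat_add (M N : mat2) : mat2 :=
  Mat2 (m11 M + m11 N) (m12 M + m12 N) (m21 M + m21 N) (m22 M + m22 N).
Definition mat_mul (M N : mat2) : mat2 :=
  Mat2 (m11 M * m11 N + m12 M * m21 N) (m11 M * m12 N + m12 M * m22 N)
       (m21 M * m11 N + m22 M * m21 N) (m21 M * m12 N + m22 M * m22 N).
Definition mat_vec (M : mat2) (v : vec2) : vec2 :=
  (m11 M * fst v + m12 M * snd v, m21 M * fst v + m22 M * snd v).
Definition det2 (M : mat2) : R := m11 M * m22 M - m12 M * m21 M.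
(* Inverse of a 2x2 matrix (adjugate / determinant); it is the genuine
   inverse whenever det2 M <> 0. *)
Definition mat_inv (M : mat2) : mat2 :=
  Mat2 (m22 M / det2 M) (- m12 M / det2 M) (- m21 M / det2 M) (m11 M / det2 M).

(* A(theta) = (R_theta - I)/2 *)
Definition Amat (t : R) : mat2 :=
  Mat2 ((cos t - 1) / 2) (- sin t / 2) (sin t / 2) ((cos t - 1) / 2).
Definition Amat' (t : R) : mat2 :=
  Mat2 (- sin t / 2) (- cos t / 2) (cos t / 2) (- sin t / 2).

Definition Iset (xi X : vec2) (t : R) : Prop :=
  - PI / 2 <= t <= PI / 2 /\
  (inner xi (mat_vec (mat_mul (mat_inv (mat_add mat_id (Amat t))) (Amat' t)) X)) ^ 2
    >= t ^ 2 * normsq X * normsq xi / 128.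

Lemma Amat'_is_derivative (t : R) :
  derivable_pt_lim (fun s => m11 (Amat s)) t (m11 (Amat' t)) /\
  derivable_pt_lim (fun s => m12 (Amat s)) t (m12 (Amat' t)) /\
  derivable_pt_lim (fun s => m21 (Amat s)) t (m21 (Amat' t)) /\
  derivable_pt_lim (fun s => m22 (Amat s)) t (m22 (Amat' t)).
Proof.
  assert (Hc : derivable_pt_lim (fun s => (cos s - 1) / 2) t (- sin t / 2)).
  { replace (- sin t / 2) with ((- sin t - 0) * / 2) by (unfold Rdiv; ring).
    apply (derivable_pt_lim_scal_right (fun s => cos s - 1) t (- sin t - 0) (/2)).
    apply derivable_pt_lim_minus; [apply derivable_pt_lim_cos | apply derivable_pt_lim_const]. }
  assert (Hs : derivable_pt_lim (fun s => sin s / 2) t (cos t / 2)).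
  { apply (derivable_pt_lim_scal_right sin t (cos t) (/2)). apply derivable_pt_lim_sin. }
  assert (Hs' : derivable_pt_lim (fun s => - sin s / 2) t (- cos t / 2)).
  { replace (- cos t / 2) with ((- cos t) * / 2) by (unfold Rdiv; ring).
    apply (derivable_pt_lim_scal_right (fun s => - sin s) t (- cos t) (/2)).
    apply derivable_pt_lim_opp. apply derivable_pt_lim_sin. }
  simpl. repeat split; assumption.
Qed.

From Stdlib Require Import Reals Lra Psatz.
Open Scope R_scope.

(* Since I + A(t) = (R_t + I)/2, the matrix (I + A(t))^-1 A'(t) is explicit, and
   <xi, (I + A(t))^-1 A'(t) X> = (xi x X - tan(t/2) <xi, X>)/2, with xi x X the
   cross product.  By Lagrange's identity |xi|^2 |X|^2 = <xi, X>^2 + (xi x X)^2.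
   For the sign of t that makes tan(t/2) <xi, X> (xi x X) <= 0, the square of the
   left-hand side is at least ((xi x X)^2 + tan(t/2)^2 <xi, X>^2)/4, and both
   coefficients dominate t^2/32 on [-pi/2, pi/2] (using |tan(t/2)| >= |sin t|/2
   and a Taylor lower bound for sin). *)

Definition cross (u v : vec2) : R := snd u * fst v - fst u * snd v.

Definition half_tan (t : R) : R := sin t / (1 + cos t).

Lemma normsq_mul_normsq (xi X : vec2) :
  normsq X * normsq xi = inner xi X ^ 2 + cross xi X ^ 2.
Proof. unfold normsq, inner, cross; ring. Qed.

Lemma det2_I_plus_Amat (t : R) : det2 (mat_add mat_id (Amat t)) = (1 + cos t) / 2.
Proof.
pose proof (sin2_cos2 t) as Hsc; unfold Rsqr in Hsc.
unfold det2, mat_add, mat_id, Amat; simpl; field_simplify; nra.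
Qed.

Lemma inv_I_plus_Amat (t : R) : 1 + cos t <> 0 ->
  mat_inv (mat_add mat_id (Amat t)) = Mat2 1 (half_tan t) (- half_tan t) 1.
Proof.
intros Hc; unfold mat_inv; rewrite det2_I_plus_Amat.
unfold half_tan, mat_add, mat_id, Amat; simpl; f_equal; field; lra.
Qed.

Lemma inner_inv_I_plus_Amat_mul_Amat' (xi X : vec2) (t : R) : 1 + cos t <> 0 ->
  inner xi (mat_vec (mat_mul (mat_inv (mat_add mat_id (Amat t))) (Amat' t)) X)
  = (cross xi X - half_tan t * inner xi X) / 2.
Proof.
intros Hc; rewrite inv_I_plus_Amat by exact Hc.
pose proof (sin2_cos2 t) as Hsc; unfold Rsqr in Hsc.
destruct xi as [x1 x2], X as [y1 y2].
unfold inner, cross, half_tan, mat_vec, mat_mul, Amat'; simpl.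
field_simplify; [| exact Hc | exact Hc].
f_equal; replace (sin t ^ 2) with (1 - cos t ^ 2) by nra; ring.
Qed.

Lemma half_tan_opp (t : R) : half_tan (- t) = - half_tan t.
Proof. unfold half_tan; rewrite sin_neg, cos_neg; unfold Rdiv; ring. Qed.

Lemma half_tan_ge0 (t : R) : 0 <= t <= PI -> 0 <= half_tan t.
Proof.
intros [H0 H1]; unfold half_tan.
pose proof (sin_ge_0 t H0 H1); pose proof (COS_bound t).
destruct (Req_dec (1 + cos t) 0) as [E | E].
- rewrite E, Rdiv_0_r; lra.
- apply Rmult_le_pos; [lra | apply Rlt_le, Rinv_0_lt_compat; lra].
Qed.

Lemma sin_sqr_le_half_tan_sqr (t : R) : sin t ^ 2 <= 4 * half_tan t ^ 2.
Proof.
pose proof (sin2_cos2 t) as Hsc; unfold Rsqr in Hsc.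
pose proof (COS_bound t).
destruct (Req_dec (1 + cos t) 0) as [E | E]; [nra |].
assert (Hs : sin t = half_tan t * (1 + cos t)) by (unfold half_tan; field; exact E).
rewrite Hs; nra.
Qed.

Lemma sqr_le_8_sin_sqr (t : R) : 0 <= t <= PI / 2 -> t ^ 2 <= 8 * sin t ^ 2.
Proof.
intros [H0 H1].
pose proof PI_4; pose proof PI2_Rlt_PI.
destruct (SIN t H0 ltac:(lra)) as [Hlb _].
unfold sin_lb, sin_approx, sin_term in Hlb; simpl in Hlb.
assert (Hpoly : 0.4 <= 1 - t ^ 2 / 6 + t ^ 4 / 120 - t ^ 6 / 5040).
{ assert (0 <= t ^ 2 <= 4) by nra.
  replace (t ^ 4) with ((t ^ 2) ^ 2) by ring.
  replace (t ^ 6) with ((t ^ 2) ^ 3) by ring.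
  nra. }
assert (0.4 * t <= sin t).
{ eapply Rle_trans; [| exact Hlb]. field_simplify. nra. }
nra.
Qed.

Lemma sqr_le_32_half_tan_sqr (t : R) :
  - PI / 2 <= t <= PI / 2 -> t ^ 2 <= 32 * half_tan t ^ 2.
Proof.
intros Ht.
assert (Hsin : t ^ 2 <= 8 * sin t ^ 2).
{ destruct (Rle_dec 0 t).
  - apply sqr_le_8_sin_sqr; lra.
  - replace (t ^ 2) with ((- t) ^ 2) by ring.
    replace (sin t ^ 2) with (sin (- t) ^ 2) by (rewrite sin_neg; ring).
    apply sqr_le_8_sin_sqr; lra. }
pose proof (sin_sqr_le_half_tan_sqr t); lra.
Qed.

Lemma half_sub_sqr_ge (a b u s : R) :
  s <= 32 * u ^ 2 -> s <= 32 -> 0 <= s -> u * (a * b) <= 0 ->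
  ((b - u * a) / 2) ^ 2 >= s * (a ^ 2 + b ^ 2) / 128.
Proof. intros; nra. Qed.

Lemma Iset_of_sign (xi X : vec2) (t : R) :
  - PI / 2 <= t <= PI / 2 -> half_tan t * (inner xi X * cross xi X) <= 0 ->
  Iset xi X t.
Proof.
intros Ht Hsign; split; [exact Ht |].
pose proof PI_4; pose proof PI2_RGT_0.
assert (Hcos : 0 <= cos t) by (apply cos_ge_0; lra).
rewrite inner_inv_I_plus_Amat_mul_Amat' by lra.
rewrite Rmult_assoc, normsq_mul_normsq.
apply half_sub_sqr_ge; [apply sqr_le_32_half_tan_sqr; exact Ht | nra | nra | exact Hsign].
Qed.

Theorem lemma4p7 (xi X : vec2) :
  (forall t, 0 < t <= PI / 2 -> Iset xi X t) \/
  (forall t, - PI / 2 <= t < 0 -> Iset xi X t).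
Proof.
pose proof PI2_Rlt_PI.
destruct (Rle_dec (inner xi X * cross xi X) 0) as [Hneg | Hpos];
  [left | right]; intros t Ht; apply Iset_of_sign; try lra.
- pose proof (half_tan_ge0 t ltac:(lra)); nra.
- rewrite <- (Ropp_involutive t), half_tan_opp.
  pose proof (half_tan_ge0 (- t) ltac:(lra)); nra.
Qed.
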